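(* Let $G$ be a median graph with $n\ge 3$ vertices in $\mathcal{U}_3$, and let $v_0$ be its unique vertex lying in every majority halfspace. Let $L$ be a nonempty pairwise orthogonal family of $\Theta$-classes each of which contains an edge incident to $v_0$, and let $V_L=\{v\in V(G)\setminus\{v_0\}: L_{v_0,v}=L\}$. Then $V_L$ is nonempty and gated.
   Context: Graphs are finite, simple, connected, undirected; $d$ is shortest-path distance; $I(u,v)=\{x:d(u,x)+d(x,v)=d(u,v)\}$; a graph is median if every triple $x,y,z$ has $|I(x,y)\cap I(y,z)\cap I(z,x)|=1$. A vertex set $H$ is gated if each vertex $v$ has a vertex $g_H(v)\in H$ with $g_H(v)\in I(v,x)$ for all $x\in H$. $\Theta$-classes: classes of the reflexive–transitive closure of the relation on edges ''opposite edges of a 4-cycle''; deleting a $\Theta$-class $E_i$ of a median graph leaves two components with vertex sets (halfspaces) $H_i',H_i''$. $\mathcal{U}_3$ is the family of median graphs with $n$ vertices in which every $\Theta$-class satisfies $\min\{|H_i'|,|H_i''|\}<n/3$; the larger halfspace is the majority halfspace. Two $\Theta$-classes $E_i,E_j$ are orthogonal if there is a 4-cycle $uvyx$ with $uv,xy\in E_i$ and $ux,vy\in E_j$; a pairwise orthogonal family (POF) is a set of pairwise orthogonal $\Theta$-classes. For $u\ne v$, the ladder set $L_{u,v}$ is the set of $\Theta$-classes $E_i$ such that $u,v$ lie in different halfspaces of $E_i$ and $u$ is an endpoint of an edge of $E_i$. *)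

From mathcomp Require Import all_boot.
Set Implicit Arguments. Unset Strict Implicit. Unset Printing Implicit Defensive.

Section MedianDefs.
Variables (T : finType) (e : rel T).

Definition ball (x : T) (n : nat) : {set T} :=
  iter n (fun B => B :|: [set y | [exists z in B, e z y]]) [set x].

(* shortest-path distance: least n with y in ball x n (graphs are connected,
   so n < #|T|) *)
Definition dist (x y : T) : nat := find (fun n => y \in ball x n) (iota 0 #|T|).

Definition interval (u v : T) : {set T} :=
  [set x | dist u x + dist x v == dist u v].

Definition median_graph : Prop :=
  forall x y z : T, #|interval x y :&: interval y z :&: interval z x| = 1.

Definition gated (H : {set T}) : Prop :=
  forall v, exists2 g, g \in H & forall x, x \in H -> g \in interval v x.

Definition is_edge (E : {set T}) : bool :=
  [exists u, exists v, e u v && (E == [set u; v])].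

Definition cycle4 (u v y x : T) : bool :=
  [&& e u v, e v y, e y x, e x u, u != y & v != x].

Definition opp (E F : {set T}) : bool :=
  [exists u, exists v, exists y, exists x,
     [&& cycle4 u v y x, E == [set u; v] & F == [set x; y]]].

Definition theta_class (E : {set T}) : {set {set T}} :=
  [set F | is_edge F && connect opp E F].

Definition is_theta (C : {set {set T}}) : bool :=
  [exists E, is_edge E && (C == theta_class E)].

Definition del (C : {set {set T}}) : rel T :=
  fun x y => e x y && ([set x; y] \notin C).

Definition half (C : {set {set T}}) (x : T) : {set T} :=
  [set y | connect (del C) x y].

Definition U3 : Prop :=
  forall C, is_theta C -> forall a b, e a b -> [set a; b] \in C ->
    3 * minn #|half C a| #|half C b| < #|T|.

Definition in_all_majority (v0 : T) : Prop :=
  forall C, is_theta C -> forall a b, e a b -> [set a; b] \in C ->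
    #|half C b| < #|half C a| -> v0 \in half C a.

Definition orthogonal (C D : {set {set T}}) : bool :=
  [exists u, exists v, exists y, exists x,
     [&& cycle4 u v y x, [set u; v] \in C, [set x; y] \in C,
         [set u; x] \in D & [set v; y] \in D]].

Definition POF (L : {set {set {set T}}}) : Prop :=
  (forall C, C \in L -> is_theta C) /\
  (forall C D, C \in L -> D \in L -> C != D -> orthogonal C D).

Definition ladder (u v : T) : {set {set {set T}}} :=
  [set C | [&& is_theta C, ~~ connect (del C) u v &
              [exists w, e u w && ([set u; w] \in C)]]].

Definition VL (v0 : T) (L : {set {set {set T}}}) : {set T} :=
  [set v | (v != v0) && (ladder v0 v == L)].

End MedianDefs.

From Pilot Require Import Defs.
From mathcomp Require Import all_boot zify.
Set Implicit Arguments. Unset Strict Implicit. Unset Printing Implicit Defensive.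

(* For an edge ab, the set W_ab of vertices closer to a than to b is convex, and
   the two halfspaces of the Theta-class of ab are W_ab and W_ba (Djokovic-Winkler).
   Hence V_L is the intersection, over the Theta-classes D with an edge at v0, of
   the halfspace of D avoiding v0 when D is in L and the one containing v0
   otherwise.  These halfspaces are convex and pairwise intersecting (for two
   classes of L because orthogonality makes all four quadrants nonempty), so the
   Helly property of convex sets in median graphs makes the intersection
   nonempty, and a nonempty convex set is gated. *)


Section MedianGraph.
Variables (T : finType) (e : rel T).
Hypotheses (e_irr : irreflexive e) (e_sym : symmetric e)
  (e_conn : forall x y : T, connect e x y).

Local Notation ball := (ball e).
Local Notation d := (dist e).

Lemma ball0 x : ball x 0 = [set x].
Proof. by []. Qed.

Lemma ballS x n : ball x n.+1 = ball x n :|: [set y | [exists z in ball x n, e z y]].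
Proof. by []. Qed.

Lemma subset_ballS x n : ball x n \subset ball x n.+1.
Proof. by rewrite ballS subsetUl. Qed.

Lemma subset_ball x n m : n <= m -> ball x n \subset ball x m.
Proof.
move=> /subnK <-; elim: (m - n) => [|k IH] //=.
exact: subset_trans IH (subset_ballS _ _).
Qed.

Lemma mem_ballS x y z n : y \in ball x n -> e y z -> z \in ball x n.+1.
Proof. by move=> yb eyz; rewrite ballS !inE; apply/orP; right; apply/existsP; exists y; rewrite yb. Qed.

Lemma mem_ball1 x y : e x y -> y \in ball x 1.
Proof. by apply: mem_ballS; rewrite ball0 set11. Qed.

Lemma ball_trans x y z n m :
  y \in ball x n -> z \in ball y m -> z \in ball x (n + m).
Proof.
move=> yb; elim: m z => [|m IH] z.
  by rewrite ball0 inE addn0 => /eqP ->.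
rewrite ballS inE addnS => /orP [/IH zb|]; first exact: subsetP (subset_ballS _ _) _ zb.
by rewrite inE => /existsP [w /andP [/IH wb ewz]]; apply: mem_ballS wb ewz.
Qed.

Lemma ball_sym x y n : y \in ball x n -> x \in ball y n.
Proof.
elim: n y => [|n IH] y; first by rewrite !ball0 !inE eq_sym.
rewrite ballS inE => /orP [/IH yb|]; first exact: subsetP (subset_ballS _ _) _ yb.
rewrite inE => /existsP [w /andP [/IH wb ewy]].
by rewrite -add1n; apply: ball_trans (mem_ball1 _) wb; rewrite e_sym.
Qed.

Lemma path_ball x p : path e x p -> last x p \in ball x (size p).
Proof.
elim: p x => [|y p IH] x; first by rewrite ball0 set11.
by move=> /andP [/mem_ball1 exy /IH]; apply: ball_trans exy.
Qed.

Lemma ball_card x y : y \in ball x #|T|.-1.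
Proof.
have /connectP [p pp ->] := e_conn x y.
case: (shortenP pp) => q qp qu _.
apply: subsetP (path_ball qp); apply: subset_ball.
by have := max_card (mem (x :: q)); rewrite (card_uniqP qu) /=; case: #|T|.
Qed.

Lemma leq_dist x y n : (d x y <= n) = (y \in ball x n).
Proof.
have card_gt0 : 0 < #|T| by apply/card_gt0P; exists x.
have has_y : has (fun k => y \in ball x k) (iota 0 #|T|).
  by apply/hasP; exists #|T|.-1; [rewrite mem_iota add0n ltn_predL | exact: ball_card].
have lt_find : d x y < #|T|.
  have := has_y; rewrite has_find size_iota; exact.

have yb : y \in ball x (d x y).
  by have := nth_find 0 has_y; rewrite nth_iota // add0n.

apply/idP/idP => [le|yb']; first exact: subsetP (subset_ball _ le) _ yb.
rewrite leqNgt; apply/negP => lt.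
have := before_find 0 lt; rewrite nth_iota; last exact: ltn_trans lt lt_find.
by rewrite add0n yb'.
Qed.

Lemma dist_ball x y : y \in ball x (d x y).
Proof. by rewrite -leq_dist. Qed.

Lemma dist0 x : d x x = 0.
Proof. by apply/eqP; rewrite -leqn0 leq_dist ball0 set11. Qed.

Lemma dist_eq0 x y : d x y = 0 -> x = y.
Proof. by move=> h; have := dist_ball x y; rewrite h ball0 inE => /eqP. Qed.

Lemma dist_sym x y : d x y = d y x.
Proof. by apply/eqP; rewrite eqn_leq !leq_dist; apply/andP; split; apply: ball_sym; apply: dist_ball. Qed.

Lemma dist_triangle x y z : d x z <= d x y + d y z.
Proof. by rewrite leq_dist; apply: ball_trans (dist_ball _ _) (dist_ball _ _). Qed.

Lemma dist_edge x y : e x y -> d x y = 1.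
Proof.
move=> exy; apply/eqP; rewrite eqn_leq leq_dist mem_ball1 // lt0n.
by apply/eqP => /dist_eq0 xy; move: exy; rewrite xy e_irr.
Qed.

Lemma dist_edge_le w u v : e u v -> d w v <= d w u + 1.
Proof. by move=> /dist_edge <-; apply: dist_triangle. Qed.

Lemma dist_edge_diff w u v : e u v -> d w u <= (d w v).+1 /\ d w v <= (d w u).+1.
Proof.
move=> euv; split.
  have := dist_edge_le w (_ : e v u); rewrite addn1; apply; rewrite e_sym; exact: euv.
by have := dist_edge_le w euv; rewrite addn1.
Qed.

Lemma dist_pred x y n : d x y = n.+1 -> exists2 z, e z y & d x z = n.
Proof.
move=> dxy; have := dist_ball x y; rewrite dxy ballS inE => /orP [|].
  by rewrite -leq_dist dxy ltnn.
rewrite inE => /existsP [z /andP [zb ezy]]; exists z => //.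
apply/eqP; rewrite eqn_leq leq_dist zb /=.
by have := dist_edge_le x ezy; rewrite dxy addn1.
Qed.

Lemma dist1_edge x y : d x y = 1 -> e x y.
Proof. by move=> /dist_pred [z ezy /dist_eq0 ->]. Qed.

Hypothesis e_median : median_graph e.

Local Notation I := (interval e).

Lemma inI x u v : (x \in I u v) = (d u x + d x v == d u v).
Proof. by rewrite inE. Qed.

Lemma interval_sym x u v : (x \in I u v) = (x \in I v u).
Proof. by rewrite !inI addnC (dist_sym v u) (dist_sym u x) (dist_sym x v). Qed.

Lemma median_exists x y z : exists m, [/\ m \in I x y, m \in I y z & m \in I z x].
Proof.
have /eqP /cards1P [m hm] := e_median x y z.
exists m; have : m \in I x y :&: I y z :&: I z x by rewrite hm set11.
by rewrite !inE -!andbA => /and3P [-> -> ->].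
Qed.

Lemma median_unique x y z m1 m2 :
  m1 \in I x y -> m1 \in I y z -> m1 \in I z x ->
  m2 \in I x y -> m2 \in I y z -> m2 \in I z x -> m1 = m2.
Proof.
move=> xy1 yz1 zx1 xy2 yz2 zx2.
have /eqP /cards1P [m hm] := e_median x y z.
have : m1 \in I x y :&: I y z :&: I z x by rewrite !inE -!inI xy1 yz1 zx1.
have : m2 \in I x y :&: I y z :&: I z x by rewrite !inE -!inI xy2 yz2 zx2.
by rewrite hm !inE => /eqP -> /eqP ->.
Qed.

(* Median graphs are bipartite: the median of w, u, v is u or v. *)
Lemma dist_edge_neq w u v : e u v -> d w u != d w v.
Proof.
move=> euv; have [m] := median_exists w u v; rewrite !inI => -[/eqP wu /eqP uv /eqP vw].
rewrite (dist_edge euv) in uv.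
have [/dist_eq0 um|/dist_eq0 mv] : d u m = 0 \/ d m v = 0 by lia.
  by move: vw; rewrite -um (dist_sym v u) (dist_edge euv) (dist_sym v w) (dist_sym u w); lia.
by move: wu; rewrite mv (dist_sym v u) (dist_edge euv); lia.
Qed.

Lemma dist_edge_succ w u v : e u v -> d w v = (d w u).+1 \/ d w u = (d w v).+1.
Proof.
move=> euv; have := dist_edge_neq w euv; have := dist_edge_le w euv.
by have := dist_edge_le w (_ : e v u); rewrite e_sym => /(_ euv); lia.
Qed.

Lemma dist_common_nbr p q u : p != q -> e u p -> e u q -> d p q = 2.
Proof.
move=> npq eup euq.
have le2 : d p q <= 2.
  by have := dist_triangle p u q; rewrite (dist_sym p u) (dist_edge eup) (dist_edge euq).
have neq0 : d p q != 0 by apply: contra npq => /eqP /dist_eq0 ->.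
have neq1 : d p q != 1.
  by apply: contraNneq (dist_edge_neq p euq) => ->; rewrite (dist_sym p u) (dist_edge eup).
lia.
Qed.

(* Otherwise u and y would be two medians of p, q, r. *)
Lemma no_K23 u y p q r : u != y -> p != q -> q != r -> p != r ->
  e u p -> e p y -> e u q -> e q y -> e u r -> e r y -> False.
Proof.
move=> nuy npq nqr npr eup epy euq eqy eur ery.
have apex a b c : a != b -> e c a -> e c b -> e a y -> e b y -> (c \in I a b) && (y \in I a b).
  move=> nab eca ecb eay eby.
  rewrite !inI (dist_common_nbr nab eca ecb) dist_sym (dist_edge eca) (dist_edge ecb).
  by rewrite (dist_edge eay) dist_sym (dist_edge eby).
have /andP [upq ypq] := apex _ _ _ npq eup euq epy eqy.
have /andP [uqr yqr] := apex _ _ _ nqr euq eur eqy ery.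
have nrp : r != p by rewrite eq_sym.
have /andP [urp yrp] := apex _ _ _ nrp eur eup ery epy.
by move: nuy; rewrite (median_unique upq uqr urp ypq yqr yrp) eqxx.
Qed.

Lemma quadrangle w u y k : u != y -> d u y = 2 -> d w u = k -> d w y = k ->
  exists z, [/\ e u z, e z y & (d w z).+1 = k].
Proof.
move=> nuy duy dwu dwy; have [m] := median_exists w u y; rewrite !inI => -[/eqP h1 /eqP h2 /eqP h3].
rewrite (dist_sym m u) dwu in h1; rewrite duy in h2.
rewrite (dist_sym y m) (dist_sym m w) (dist_sym y w) dwy in h3.
have hu : d u m != 0.
  by apply/eqP => /dist_eq0 um; move: h3; rewrite -um duy; lia.
have hy : d m y != 0.
  by apply/eqP => /dist_eq0 my; move: h1; rewrite my duy; lia.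
by exists m; split; [apply: dist1_edge; lia | apply: dist1_edge; lia | lia].
Qed.

Definition convex (H : {set T}) :=
  forall x y z, x \in H -> y \in H -> z \in I x y -> z \in H.

Definition W a b : {set T} := [set x | d x a < d x b].

Lemma inW x a b : (x \in W a b) = (d x a < d x b).
Proof. by rewrite inE. Qed.

Lemma mem_W_edge a b : e a b -> a \in W a b.
Proof. by move=> eab; rewrite inW dist0 dist_edge. Qed.

Lemma W_compl a b x : e a b -> (x \in W b a) = (x \notin W a b).
Proof. by move=> eab; rewrite !inW; have := dist_edge_succ x eab; lia. Qed.

Lemma W_setC a b : e a b -> W b a = ~: W a b.
Proof. by move=> eab; apply/setP => x; rewrite in_setC W_compl. Qed.

Lemma cycle4_rev u v y x : cycle4 e u v y x -> cycle4 e x y v u.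
Proof.
move=> /and5P [euv evy eyx exu /andP [nuy nvx]].
by rewrite /cycle4 !(e_sym x y, e_sym y v, e_sym v u, e_sym u x) eyx evy euv exu
  (eq_sym x v) nvx (eq_sym y u) nuy.
Qed.

Lemma W_cycle4_sub u v y x : cycle4 e u v y x -> W u v \subset W x y.
Proof.
move=> /and5P [euv evy eyx exu /andP [nuy nvx]].
apply/subsetP => w; rewrite !inW ltnNge => wuv; apply/negP => wyx.
have := dist_edge_succ w eyx; have := dist_edge_succ w euv.
have := dist_edge_succ w evy; have := dist_edge_succ w exu.
move=> wxu wvy wuv' wyx'.
have wy : d w y = d w u by lia.
have duy : d u y = 2 by apply: (dist_common_nbr (u := v)) nuy _ evy; rewrite e_sym.
have [z [euz ezy wz]] := quadrangle nuy duy (erefl _) wy.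
have nxz : x != z by apply/eqP => xz; move: wz; rewrite -xz; lia.
have nvz : v != z by apply/eqP => vz; move: wz; rewrite -vz; lia.
by case: (no_K23 nuy nvx nxz nvz); rewrite // e_sym.
Qed.

Lemma W_cycle4 u v y x : cycle4 e u v y x -> W u v = W x y.
Proof.
by move=> c; apply/eqP; rewrite eqEsubset W_cycle4_sub //= W_cycle4_sub // cycle4_rev.
Qed.

Lemma opp_sym : symmetric (opp e).
Proof.
suff opp_swap E F : opp e E F -> opp e F E by move=> E F; apply/idP/idP; apply: opp_swap.
move=> /existsP [u /existsP [v /existsP [y /existsP [x /and3P [c /eqP -> /eqP ->]]]]].
apply/existsP; exists x; apply/existsP; exists y; apply/existsP; exists v; apply/existsP; exists u.
by rewrite cycle4_rev //= !eqxx.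
Qed.

Lemma eq_set2 (x y p q : T) : [set x; y] = [set p; q] ->
  (p = x /\ q = y) \/ (p = y /\ q = x).
Proof.
move=> xy_pq.
have /set2P hp : p \in [set x; y] by rewrite xy_pq set21.
have /set2P hq : q \in [set x; y] by rewrite xy_pq set22.
have /set2P hx : x \in [set p; q] by rewrite -xy_pq set21.
have /set2P hy : y \in [set p; q] by rewrite -xy_pq set22.
by case: hp hq => hp [] hq; subst; auto; [case: hy | case: hx] => ->; auto.
Qed.

Lemma W_theta a b p q : e a b -> connect (opp e) [set a; b] [set p; q] ->
  W p q = W a b \/ W p q = W b a.
Proof.
move=> eab /connectP [s]; elim/last_ind: s p q => [|s G IH] p q.
  by move=> _ /eq_set2 [[-> ->]|[-> ->]]; [left | right].
rewrite rcons_path last_rcons => /andP [/IH {}IH] + pqG; rewrite -pqG.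
move=> /existsP [u /existsP [v /existsP [y /existsP [x /and3P [c /eqP uv /eqP /eq_set2 xy]]]]].
have exy : e x y by rewrite e_sym; case/and5P: c.
have Wyx : W y x = ~: W u v by rewrite (W_setC exy) (W_cycle4 c).
have Wba : W b a = ~: W a b by rewrite (W_setC eab).
case: xy => -[<- <-]; rewrite ?Wyx -?(W_cycle4 c);
  by case: (IH u v (esym uv)) => ->; rewrite ?Wba ?setCK; auto.
Qed.

Lemma theta_separates a b p q : e a b -> e p q ->
  connect (opp e) [set a; b] [set p; q] -> (p \in W a b) != (q \in W a b).
Proof.
move=> eab epq ab_pq.
have pW : p \in W p q by apply: mem_W_edge.
have qW : q \notin W p q by rewrite -W_compl // mem_W_edge // e_sym.
have [Wpq|Wpq] := W_theta eab ab_pq; rewrite Wpq in pW qW.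
  by rewrite pW (negbTE qW).
by rewrite W_compl // negbK in qW; rewrite W_compl // in pW; rewrite (negbTE pW) qW.
Qed.

(* Induction on d p a: the quadrangle condition at b yields a 4-cycle p' z q p
   whose edge p'z is a separating edge one step closer to a. *)
Lemma separating_edge_theta a b p q : e a b -> e p q ->
  p \in W a b -> q \notin W a b -> connect (opp e) [set a; b] [set p; q].
Proof.
move=> eab; move Dk: (d p a) => k; elim: k p q Dk => [|k IH] p q pa epq.
  move/dist_eq0: pa epq => -> eaq _.
  rewrite inW -leqNgt (dist_sym q a) (dist_edge eaq) => qb.
  have /dist_eq0 -> : d q b = 0.
    by have := dist_edge_succ q eab; rewrite (dist_sym q a) (dist_edge eaq); lia.
  exact: connect0.
rewrite !inW => pW qW.
have [p' ep'p p'a] : exists2 p', e p' p & d p' a = k.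
  have [p' ep'p ap'] := dist_pred (etrans (dist_sym a p) pa).
  by exists p'; rewrite // dist_sym.
have [pq_a pq_b] := (dist_edge_diff a epq, dist_edge_diff b epq).
have [p'p_a p'p_b] := (dist_edge_diff a ep'p, dist_edge_diff b ep'p).
rewrite !(dist_sym a) !(dist_sym b) in pq_a pq_b p'p_a p'p_b.
have := dist_edge_succ p eab; have := dist_edge_succ q eab; have := dist_edge_succ p' eab.
move=> p'_ab q_ab p_ab.
have qb : d q b = k.+1 by lia.
have p'b : d p' b = k.+1 by lia.
have np'q : p' != q by apply/eqP => p'q; move: p'a; rewrite p'q; lia.
have p'q : d p' q = 2 by apply: (dist_common_nbr (u := p)) => //; rewrite e_sym.
have [z [ep'z ezq zb]] := quadrangle np'q p'q (etrans (dist_sym b p') p'b) (etrans (dist_sym b q) qb).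
have [zq_a p'z_a] := (dist_edge_diff a ezq, dist_edge_diff a ep'z).
rewrite !(dist_sym a) (dist_sym b z) in zq_a p'z_a zb.
have za : d z a = k.+1 by have := dist_edge_succ z eab; lia.
apply: connect_trans (IH p' z p'a ep'z _ _) (connect1 _); rewrite ?inW; try lia.
apply/existsP; exists p'; apply/existsP; exists z; apply/existsP; exists q; apply/existsP; exists p.
rewrite !eqxx /cycle4 ep'z ezq (e_sym q p) epq (e_sym p p') ep'p np'q !andbT /=.
by apply/eqP => zp; move: zb; rewrite zp; lia.
Qed.

(* A geodesic leaving W_ab crosses an edge xx1 of the Theta-class of ab, and
   W_(x x1) = W_ab then keeps the rest of the geodesic outside W_ab. *)
Lemma W_convex a b : e a b -> convex (W a b).
Proof.
move=> eab.
suff W_geodesic n x z y : d x z = n ->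
    x \in W a b -> z \notin W a b -> z \in I x y -> y \notin W a b.
  move=> x y z xW yW zI; apply: contraTT yW => zW; exact: W_geodesic (erefl _) xW zW zI.
elim: n x => [|n IH] x xz xW zW.
  by move/dist_eq0: xz zW => <-; rewrite xW.
rewrite inI => /eqP xzy.
have [x1 ex1x zx1] := dist_pred (etrans (dist_sym z x) xz).
rewrite dist_sym in zx1.
have exx1 : e x x1 by rewrite e_sym.
have x1y : d x1 y = n + d z y.
  have := dist_triangle x1 z y; have := dist_triangle x x1 y.
  by rewrite (dist_sym x x1) (dist_edge ex1x); lia.
have [x1W|x1W] := boolP (x1 \in W a b).
  by apply: (IH _ zx1 x1W zW); rewrite inI zx1 x1y.
have yW1 : y \in W x1 x by rewrite inW (dist_sym y x1) (dist_sym y x) x1y -xzy xz.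
have [Wx|Wx] := W_theta eab (separating_edge_theta eab exx1 xW x1W).
  by rewrite W_compl // Wx in yW1.
by move: (mem_W_edge exx1); rewrite Wx W_compl // xW.
Qed.

Lemma theta_classE C F : is_theta e C -> F \in C -> C = theta_class e F.
Proof.
move=> /existsP [E /andP [_ /eqP ->]]; rewrite inE => /andP [_ EF].
by apply/setP => G; rewrite !inE (same_connect (sym_connect_sym opp_sym) EF).
Qed.

Lemma theta_class_eq C D F : is_theta e C -> is_theta e D -> F \in C -> F \in D -> C = D.
Proof. by move=> tC tD FC FD; rewrite (theta_classE tC FC) (theta_classE tD FD). Qed.

Lemma is_edge_set2 p q : e p q -> is_edge e [set p; q].
Proof. by move=> epq; apply/existsP; exists p; apply/existsP; exists q; rewrite epq eqxx. Qed.

Lemma mem_theta_W C a w p q : is_theta e C -> e a w -> [set a; w] \in C -> e p q ->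
  ([set p; q] \in C) = ((p \in W a w) != (q \in W a w)).
Proof.
move=> tC eaw awC epq; rewrite (theta_classE tC awC) inE is_edge_set2 //=.
apply/idP/idP; first exact: theta_separates.
case pW: (p \in W a w); case qW: (q \in W a w) => //= _.
  exact: separating_edge_theta eaw epq pW (negbT qW).
rewrite [[set p; q]]setUC; apply: separating_edge_theta eaw _ qW (negbT pW).
by rewrite e_sym.
Qed.

Lemma half_W C a w : is_theta e C -> e a w -> [set a; w] \in C -> Defs.half e C a = W a w.
Proof.
move=> tC eaw awC; apply/setP => z; rewrite inE.
have aW := mem_W_edge eaw.
apply/idP/idP => [az|].
  have W_closed : closed (del e C) (W a w).
    move=> x y /andP [exy]; rewrite (mem_theta_W tC eaw awC exy).
    by case: (x \in W a w); case: (y \in W a w).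
  by rewrite -(closed_connect W_closed az).
move Dn: (d a z) => n; elim: n z Dn => [|n IH] z az zW.
  by move/dist_eq0: az => ->; apply: connect0.
have [z' ez'z az'] := dist_pred az.
have z'W : z' \in W a w.
  by apply: (W_convex eaw aW zW); rewrite inI az' (dist_edge ez'z) az addn1.
apply: connect_trans (IH _ az' z'W) (connect1 _).
by rewrite /del ez'z (mem_theta_W tC eaw awC ez'z) zW z'W.
Qed.

Lemma half_convex C a w : is_theta e C -> e a w -> [set a; w] \in C -> convex (Defs.half e C a).
Proof. by move=> tC eaw awC; rewrite (half_W tC eaw awC); apply: W_convex. Qed.

Lemma setC_half C a w : is_theta e C -> e a w -> [set a; w] \in C ->
  ~: Defs.half e C a = Defs.half e C w.
Proof.
move=> tC eaw awC; have ewa : e w a by rewrite e_sym.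
by rewrite (half_W tC eaw awC) (half_W tC ewa) ?(W_setC eaw) // setUC.
Qed.

Lemma half_edge_in C a w p q : is_theta e C -> e a w -> [set a; w] \in C ->
  e p q -> [set p; q] \in C -> (q \in Defs.half e C a) = (p \notin Defs.half e C a).
Proof.
move=> tC eaw awC epq; rewrite (half_W tC eaw awC) (mem_theta_W tC eaw awC epq).
by case: (p \in W a w); case: (q \in W a w).
Qed.

Lemma half_edge_out (C : {set {set T}}) a p q : e p q -> [set p; q] \notin C ->
  (q \in Defs.half e C a) = (p \in Defs.half e C a).
Proof.
move=> epq pqC; rewrite !inE; apply/idP/idP => ap; apply: connect_trans ap (connect1 _).
  by rewrite /del e_sym epq setUC.
by rewrite /del epq.
Qed.

Lemma convexI A B : convex A -> convex B -> convex (A :&: B).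
Proof.
move=> cA cB x y z /setIP [xA xB] /setIP [yA yB] zI.
by rewrite inE (cA x y z) // (cB x y z).
Qed.

Lemma convex_bigcap (J : finType) (P : pred J) (F : J -> {set T}) :
  (forall i, P i -> convex (F i)) -> convex (\bigcap_(i | P i) F i).
Proof.
move=> cF x y z /bigcapP xF /bigcapP yF zI; apply/bigcapP => i Pi.
exact: cF Pi x y z (xF i Pi) (yF i Pi) zI.
Qed.

(* A vertex of a nonempty convex set closest to v is its gate. *)
Lemma convex_gated H : H != set0 -> convex H -> gated e H.
Proof.
move=> /set0Pn [g0 g0H] cH v.
case: (@arg_minnP _ g0 (mem H) (fun g => d v g) g0H) => g gH g_min.
exists g => // x xH; have [m [vg gx xv]] := median_exists v g x.
have /dist_eq0 mg : d m g = 0.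
  by have := g_min m (cH g x m gH xH gx); move: vg; rewrite inI => /eqP vg gm; lia.
by rewrite -mg interval_sym.
Qed.

(* The median of three pairwise common points lies in all three sets. *)
Lemma convex_meet3 A B C a b c : convex A -> convex B -> convex C ->
  a \in A :&: B -> b \in B :&: C -> c \in C :&: A -> A :&: B :&: C != set0.
Proof.
move=> cA cB cC /setIP [aA aB] /setIP [bB bC] /setIP [cC' cA'].
have [m [ab bc ca]] := median_exists a b c.
by apply/set0Pn; exists m; rewrite !inE (cA c a m) // (cB a b m) // (cC b c m).
Qed.

Lemma helly (s : seq {set T}) : s != [::] -> {in s, forall A, convex A} ->
  {in s &, forall A B, A :&: B != set0} -> exists x : T, {in s, forall A : {set T}, x \in A}.
Proof.
have [n] := ubnP (size s); elim: n s => // n IH [//|A [|B s]] /= size_lt _ cs ms.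
  have /set0Pn [x] := ms A A (mem_head _ _) (mem_head _ _).
  by rewrite setIid => xA; exists x => C; rewrite inE => /eqP ->.
have As : A \in [:: A, B & s] by rewrite mem_head.
have [x xs'] : exists x : T, {in [seq A :&: C | C <- B :: s], forall C : {set T}, x \in C}.
  apply: IH; [by rewrite size_map | by [] | |].
    by move=> _ /mapP [C Cs ->]; apply: convexI; apply: cs; rewrite // inE Cs orbT.
  move=> _ _ /mapP [C1 C1s ->] /mapP [C2 C2s ->].
  have C1s' : C1 \in [:: A, B & s] by rewrite inE C1s orbT.
  have C2s' : C2 \in [:: A, B & s] by rewrite inE C2s orbT.
  have /set0Pn [a aAC1] := ms _ _ As C1s'.
  have /set0Pn [b bC12] := ms _ _ C1s' C2s'.
  have /set0Pn [c cC2A] := ms _ _ C2s' As.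
  have /set0Pn [y] := convex_meet3 (cs _ As) (cs _ C1s') (cs _ C2s') aAC1 bC12 cC2A.
  by rewrite !inE => /andP [/andP [yA yC1] yC2]; apply/set0Pn; exists y; rewrite !inE yA yC1 yC2.
exists x => C; rewrite inE => /predU1P [->|Cs].
  by have /setIP [] := xs' (A :&: B) (mem_head _ _).
by have /setIP [] := xs' (A :&: C) (map_f _ Cs).
Qed.

Lemma helly_bigcap (J : finType) (P : pred J) (F : J -> {set T}) : (exists i, P i) ->
  (forall i, P i -> convex (F i)) -> (forall i j, P i -> P j -> F i :&: F j != set0) ->
  \bigcap_(i | P i) F i != set0.
Proof.
move=> [i0 Pi0] cF mF.
have [|||x xF] := @helly [seq F i | i <- enum P].
- have i0s : F i0 \in [seq F i | i <- enum P] by rewrite map_f ?mem_enum.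
  by apply: contraTneq i0s => ->.
- by move=> _ /mapP [i + ->]; rewrite mem_enum; apply: cF.
- by move=> _ _ /mapP [i + ->] /mapP [j + ->]; rewrite !mem_enum; apply: mF.
by apply/set0Pn; exists x; apply/bigcapP => i Pi; apply: xF; apply: map_f; rewrite mem_enum.
Qed.

Definition theta_at v0 C := is_theta e C && [exists w, e v0 w && ([set v0; w] \in C)].

Lemma theta_atP v0 C :
  reflect (exists w, [/\ is_theta e C, e v0 w & [set v0; w] \in C]) (theta_at v0 C).
Proof.
apply: (iffP andP) => [[tC /existsP [w /andP [ew wC]]]|[w [tC ew wC]]]; first by exists w.
by split=> //; apply/existsP; exists w; rewrite ew.
Qed.

Lemma ladderE v0 z C :
  (C \in ladder e v0 z) = theta_at v0 C && (z \notin Defs.half e C v0).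
Proof. by rewrite !inE /theta_at /Defs.half [RHS]andbAC andbA. Qed.

Lemma orthogonal_quadrant a C D b1 b2 : theta_at a C -> theta_at a D ->
  C != D -> orthogonal e C D ->
  exists z, (z \in Defs.half e C a) = b1 /\ (z \in Defs.half e D a) = b2.
Proof.
move=> /theta_atP [w1 [tC ew1 w1C]] /theta_atP [w2 [tD ew2 w2D]] CD.
move=> /existsP [u /existsP [v /existsP [y /existsP [x /and5P [c uvC xyC uxD vyD]]]]].
have /and5P [euv evy eyx exu _] := c.
have eux : e u x by rewrite e_sym.
have exy : e x y by rewrite e_sym.
have CnD G : G \in C -> G \notin D.
  by move=> GC; apply: contra CD => GD; apply/eqP; apply: theta_class_eq GC GD.
have DnC G : G \in D -> G \notin C.
  by move=> GD; apply: contra CD => GC; apply/eqP; apply: theta_class_eq GC GD.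
have Cv := half_edge_in tC ew1 w1C euv uvC.
have Cx := half_edge_out a eux (DnC _ uxD).
have Cy := half_edge_in tC ew1 w1C exy xyC; rewrite Cx in Cy.
have Dv := half_edge_out a euv (CnD _ uvC).
have Dx := half_edge_in tD ew2 w2D eux uxD.
have Dy := half_edge_out a exy (CnD _ xyC); rewrite Dx in Dy.
exists (if (u \in Defs.half e C a) == b1 then if (u \in Defs.half e D a) == b2 then u else x
        else if (u \in Defs.half e D a) == b2 then v else y).
case: b1; case: b2; case Cu: (u \in Defs.half e C a); case Du: (u \in Defs.half e D a);
  by rewrite /= ?Cv ?Cx ?Cy ?Dv ?Dx ?Dy ?Cu ?Du.
Qed.

Section Ladder.
Variables (v0 : T) (L : {set {set {set T}}}).
Hypotheses (L_neq0 : L != set0) (L_theta_at : forall C, C \in L -> theta_at v0 C)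
  (L_orthogonal : forall C D, C \in L -> D \in L -> C != D -> orthogonal e C D).

Definition side D := if D \in L then ~: Defs.half e D v0 else Defs.half e D v0.

Lemma side_convex D : theta_at v0 D -> convex (side D).
Proof.
move=> /theta_atP [w [tD ew wD]]; rewrite /side; case: ifP => _; last exact: half_convex tD ew wD.
have ewv : e w v0 by rewrite e_sym.
have wvD : [set w; v0] \in D by rewrite setUC.
by rewrite (setC_half tD ew wD); apply: half_convex tD ewv wvD.
Qed.

Lemma side_meet D1 D2 : theta_at v0 D1 -> theta_at v0 D2 -> side D1 :&: side D2 != set0.
Proof.
move=> tD1 tD2; have v0_half D : v0 \in Defs.half e D v0 by rewrite inE connect0.
have [w1 [tD1' ew1 w1D1]] := theta_atP _ _ tD1.
have [w2 [tD2' ew2 w2D2]] := theta_atP _ _ tD2.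
have w1_far : w1 \notin Defs.half e D1 v0 by rewrite (half_edge_in tD1' ew1 w1D1 ew1 w1D1) v0_half.
have w2_far : w2 \notin Defs.half e D2 v0 by rewrite (half_edge_in tD2' ew2 w2D2 ew2 w2D2) v0_half.
have w_near D D' w : is_theta e D -> is_theta e D' -> D != D' -> e v0 w -> [set v0; w] \in D ->
    w \in Defs.half e D' v0.
  move=> tD tD' DD' ew wD; rewrite (half_edge_out v0 ew) ?v0_half //.
  by apply: contra DD' => wD'; apply/eqP; apply: theta_class_eq wD wD'.
rewrite /side; apply/set0Pn.
case L1: (D1 \in L); case L2: (D2 \in L) => /=.
- have [<-|D12] := eqVneq D1 D2; first by exists w1; rewrite setIid in_setC.
  have [z [zD1 zD2]] := orthogonal_quadrant false false tD1 tD2 D12 (L_orthogonal L1 L2 D12).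
  by exists z; rewrite in_setI !in_setC zD1 zD2.
- have D12 : D1 != D2 by apply: contraTneq L1 => ->; rewrite L2.
  by exists w1; rewrite in_setI in_setC w1_far (w_near D1 D2 w1).
- have D21 : D2 != D1 by apply: contraTneq L2 => ->; rewrite L1.
  by exists w2; rewrite in_setI in_setC w2_far (w_near D2 D1 w2).
- by exists v0; rewrite in_setI !v0_half.
Qed.

Lemma VL_bigcap : VL e v0 L = \bigcap_(D | theta_at v0 D) side D.
Proof.
apply/setP => z; rewrite inE; apply/andP/bigcapP => [[_ /eqP lad] D tD | z_sides].
  rewrite /side -lad ladderE tD /=.
  by case: (boolP (z \in Defs.half e D v0)) => zD; rewrite ?in_setC zD.
have /set0Pn [C CL] := L_neq0.
split.
  apply: contraTneq (z_sides C (L_theta_at CL)) => ->.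
  by rewrite /side CL !inE connect0.
apply/eqP/setP => D; rewrite ladderE.
case tD: (theta_at v0 D); last by apply/esym/negbTE; apply: contraFN tD; apply: L_theta_at.
by have := z_sides D tD; rewrite /side; case: (D \in L); rewrite ?inE => ->.
Qed.

End Ladder.

End MedianGraph.

Theorem mainTheorem11 (T : finType) (e : rel T) (v0 : T)
  (L : {set {set {set T}}}) :
  irreflexive e -> symmetric e -> (forall x y : T, connect e x y) ->
  median_graph e -> 3 <= #|T| -> U3 e -> in_all_majority e v0 ->
  L != set0 -> POF e L ->
  (forall C, C \in L -> exists w, e v0 w && ([set v0; w] \in C)) ->
  VL e v0 L != set0 /\ gated e (VL e v0 L).
Proof.
move=> e_irr e_sym e_conn e_median _ _ _ L_neq0 [L_theta L_orth] L_at.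
have L_theta_at C : C \in L -> theta_at e v0 C.
  by move=> CL; have [w ew] := L_at C CL; rewrite /theta_at L_theta //; apply/existsP; exists w.
have sides_convex D : theta_at e v0 D -> convex e (side e v0 L D) by apply: side_convex.
have VL_neq0 : VL e v0 L != set0.
  rewrite (VL_bigcap L_neq0 L_theta_at); apply: (helly_bigcap e_median _ sides_convex).
    by have [C0 C0L] := set0Pn _ L_neq0; exists C0; apply: L_theta_at.
  by move=> D1 D2; apply: side_meet.
split=> //; apply: convex_gated e_sym e_conn e_median _ VL_neq0 _.
by rewrite (VL_bigcap L_neq0 L_theta_at); exact: convex_bigcap sides_convex.
Qed.
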